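(* Let $(\mathcal{K}_i)_{i\ge1}$ be a sequence of ME-consistent $\mathcal{ALCP}$ knowledge bases over $\mathcal{L}$ converging to an ME-consistent knowledge base $\mathcal{K}$, let $C,D$ be concepts and $\kappa\in\mathcal{L}$, and write $\mathcal{B}_{\mathcal{K}_i}(C\sqsubseteq D\mid\kappa)=[\ell_i,u_i]$ and $\mathcal{B}_{\mathcal{K}}(C\sqsubseteq D\mid\kappa)=[\ell,u]$. Then $\ell_i\to\ell$ and $u_i\to u$ in $\mathbb{R}$.
   Context: $\mathcal{L}$ is a propositional language over a finite set of variables; $\mathrm{Int}(\mathcal{L})$ is the set of truth assignments. A probability distribution over $\mathcal{L}$ is $P:\mathrm{Int}(\mathcal{L})\to[0,1]$ summing to $1$ (a vector in $\mathbb{R}^{\mathrm{Int}(\mathcal{L})}$), with $P(\phi)=\sum_{v\models\phi}P(v)$. A probabilistic constraint is $c_0+\sum_{i=1}^k c_i\,\mathsf{p}(\phi_i)\ge 0$ ($c_i\in\mathbb{R}$, $\phi_i\in\mathcal{L}$), satisfied by $P$ iff $c_0+\sum_ic_iP(\phi_i)\ge0$; $\mathrm{Mod}(\mathcal{R})$ is the set of distributions satisfying all constraints in $\mathcal{R}$; for consistent $\mathcal{R}$, $P^{ME}_{\mathcal{R}}$ is the unique maximizer in $\mathrm{Mod}(\mathcal{R})$ of $H(P)=-\sum_vP(v)\log P(v)$. Concepts: $C::=A\mid\neg C\mid C\sqcap C\mid\exists r.C$. An $\mathcal{L}$-GCI is $\langle C\sqsubseteq D:\kappa\rangle$, $\kappa\in\mathcal{L}$;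 an $\mathcal{L}$-TBox is a finite set of them; a KB is $\mathcal{K}=(\mathcal{R},\mathcal{T})$. A possible world $\mathcal{I}=(\Delta^{\mathcal{I}},\cdot^{\mathcal{I}},v^{\mathcal{I}})$ is a classical $\mathcal{ALC}$ interpretation together with $v^{\mathcal{I}}\in\mathrm{Int}(\mathcal{L})$; it models $\langle C\sqsubseteq D:\kappa\rangle$ iff $v^{\mathcal{I}}\not\models\kappa$ or $C^{\mathcal{I}}\subseteq D^{\mathcal{I}}$; $\mathrm{Mod}(\mathcal{T})$ is the set of possible worlds modelling all GCIs of $\mathcal{T}$. An $\mathcal{ALCP}$-interpretation $\mathcal{P}=(\mathfrak{I},P_{\mathfrak{I}})$ is a nonempty finite set of possible worlds with a probability distribution on it; $P^{\mathcal{P}}(v)=\sum_{\mathcal{I}\in\mathfrak{I},v^{\mathcal{I}}=v}P_{\mathfrak{I}}(\mathcal{I})$. $\mathcal{P}$ is an ME-$\mathcal{ALCP}$-model of $\mathcal{K}$ iff $\mathfrak{I}\subseteq\mathrm{Mod}(\mathcal{T})$ and $P^{\mathcal{P}}=P^{ME}_{\mathcal{R}}$; $\mathrm{Mod}_{ME}(\mathcal{K})$ is the set of these; $\mathcal{K}$ is ME-consistent iff it is nonempty. $\Pr_{\mathcal{P}}(C\sqsubseteq D\mid\kappa)=\big(\sum_{\mathcal{I}\in\mathfrak{I},v^{\mathcal{I}}\models\kappa,C^{\mathcal{I}}\subseteq D^{\mathcal{I}}}P_{\mathfrak{I}}(\mathcal{I})\big)/\big(\sum_{\mathcal{I}\in\mathfrak{I},v^{\mathcal{I}}\models\kappa}P_{\mathfrak{I}}(\mathcal{I})\big)$.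 The belief interval $\mathcal{B}_{\mathcal{K}}(C\sqsubseteq D\mid\kappa)$ is $[\inf,\sup]$ of $\Pr_{\mathcal{P}}(C\sqsubseteq D\mid\kappa)$ over $\mathcal{P}\in\mathrm{Mod}_{ME}(\mathcal{K})$. The Blaschke distance between convex sets $S_1,S_2$ of distributions is $\inf\{\delta\in\mathbb{R}\mid \forall P_1\in S_1\exists P_2\in S_2: \|P_1-P_2\|\le\delta \text{ and } \forall P_2\in S_2\exists P_1\in S_1:\|P_2-P_1\|\le\delta\}$, with $\|\cdot\|$ the Euclidean norm. A sequence $\mathcal{K}_i=(\mathcal{R}_i,\mathcal{T}_i)$ converges to $\mathcal{K}=(\mathcal{R},\mathcal{T})$ iff $\mathrm{Mod}(\mathcal{T}_i)=\mathrm{Mod}(\mathcal{T})$ for all $i$ and $\mathrm{Mod}(\mathcal{R}_i)$ converges to $\mathrm{Mod}(\mathcal{R})$ in the Blaschke distance. *)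

From HB Require Import structures.
From mathcomp Require Import all_boot all_order all_algebra.
From mathcomp Require Import all_classical all_reals all_analysis.
From Stdlib Require Lists.List.
Set Implicit Arguments. Unset Strict Implicit. Unset Printing Implicit Defensive.
Import Order.TTheory GRing.Theory Num.Theory.
Import numFieldNormedType.Exports.
Local Open Scope classical_set_scope.
Local Open Scope ring_scope.

Inductive pform (V : Type) : Type :=
| FVar of V
| FTop
| FBot
| FNeg of pform V
| FAnd of pform V & pform V
| FOr of pform V & pform V
| FImp of pform V & pform V.
Arguments FTop {V}. Arguments FBot {V}.

Definition interp (V : finType) := {ffun V -> bool}.

Fixpoint fsat (V : finType) (v : interp V) (f : pform V) : bool :=
  match f with
  | FVar x => v x
  | FTop => true
  | FBot => false
  | FNeg g => ~~ fsat v g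
  | FAnd g h => fsat v g && fsat v h
  | FOr g h => fsat v g || fsat v h
  | FImp g h => fsat v g ==> fsat v h
  end.

Section Prob.
Variables (R : realType) (V : finType).

Definition dvec := {ffun interp V -> R}.

Definition is_distr (P : dvec) : Prop :=
  (forall v, 0 <= P v <= 1) /\ \sum_(v : interp V) P v = 1.

Definition probf (P : dvec) (phi : pform V) : R := \sum_(v : interp V | fsat v phi) P v.

Record pconstr := PConstr { pc_c0 : R; pc_terms : seq (R * pform V) }.

Definition sat_pconstr (P : dvec) (c : pconstr) : Prop :=
  0 <= pc_c0 c + \sum_(t <- pc_terms c) t.1 * probf P t.2.

Definition ModR (rs : seq pconstr) : set dvec :=
  [set P | is_distr P /\ forall c, Stdlib.Lists.List.In c rs -> sat_pconstr P c].

(* entropy H(P) = - sum_v P(v) log P(v)  (with 0 log 0 = 0, as ln 0 = 0 here) *)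
Definition entropy (P : dvec) : R := - \sum_(v : interp V) P v * ln (P v).

Definition is_ME (rs : seq pconstr) (P : dvec) : Prop :=
  ModR rs P /\ forall Q, ModR rs Q -> entropy Q <= entropy P.

Definition edist (P1 P2 : dvec) : R :=
  Num.sqrt (\sum_(v : interp V) (P1 v - P2 v) ^+ 2).

Definition blaschke (S1 S2 : set dvec) : R :=
  inf [set d : R |
        (forall P1, S1 P1 -> exists P2, S2 P2 /\ edist P1 P2 <= d) /\
        (forall P2, S2 P2 -> exists P1, S1 P1 /\ edist P2 P1 <= d)].
End Prob.

Inductive concept (NC NR : Type) : Type :=
| CAtom of NC
| CNeg of concept NC NR
| CAnd of concept NC NR & concept NC NR
| CEx of NR & concept NC NR.

Record pworld (V : finType) (NC NR : Type) := PWorld {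
  pw_dom : Type;
  pw_elt : pw_dom;                                (* domain is nonempty *)
  pw_cn : NC -> set pw_dom;
  pw_rn : NR -> pw_dom -> pw_dom -> Prop;
  pw_val : interp V
}.
Arguments pw_cn {V NC NR} p _ _.
Arguments pw_rn {V NC NR} p _ _ _.
Arguments pw_val {V NC NR} p.
Arguments pw_dom {V NC NR} p.

Section Ext.
Variables (V : finType) (NC NR : Type) (I : pworld V NC NR).
Fixpoint cext (C : concept NC NR) : set (pw_dom I) :=
  match C with
  | CAtom A => pw_cn I A
  | CNeg C' => ~` cext C'
  | CAnd C1 C2 => cext C1 `&` cext C2
  | CEx r C' => [set x | exists y, pw_rn I r x y /\ cext C' y]
  end.
End Ext.
Arguments cext {V NC NR} I C.

Record gci (V : finType) (NC NR : Type) :=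
  GCI { g_lhs : concept NC NR; g_rhs : concept NC NR; g_ctx : pform V }.

Definition models_gci (V : finType) (NC NR : Type) (I : pworld V NC NR)
  (g : gci V NC NR) : Prop :=
  ~~ fsat (pw_val I) (g_ctx g) \/ cext I (g_lhs g) `<=` cext I (g_rhs g).

Definition ModT (V : finType) (NC NR : Type) (T : seq (gci V NC NR))
  (I : pworld V NC NR) : Prop :=
  forall g, Stdlib.Lists.List.In g T -> models_gci I g.

Definition kb (R : realType) (V : finType) (NC NR : Type) :=
  (seq (pconstr R V) * seq (gci V NC NR))%type.

(* ALCP-interpretation: a nonempty finite family of possible worlds with a
   probability distribution on it (nonemptiness follows from summing to 1). *)
Record alcp (R : realType) (V : finType) (NC NR : Type) := ALCP {
  ap_W : finType;
  ap_world : ap_W -> pworld V NC NR;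
  ap_pr : ap_W -> R;
  ap_pr_ge0 : forall w, 0 <= ap_pr w;
  ap_pr_sum1 : \sum_(w : ap_W) ap_pr w = 1
}.
Arguments ap_W {R V NC NR} a.
Arguments ap_world {R V NC NR} a _.
Arguments ap_pr {R V NC NR} a _.

Section ALCP.
Variables (R : realType) (V : finType) (NC NR : Type).

Definition induced (P : alcp R V NC NR) : dvec R V :=
  [ffun v => \sum_(w : ap_W P | pw_val (ap_world P w) == v) ap_pr P w].

Definition ME_model (K : kb R V NC NR) (P : alcp R V NC NR) : Prop :=
  (forall w, ModT K.2 (ap_world P w)) /\ is_ME K.1 (induced P).

Definition ME_consistent (K : kb R V NC NR) : Prop :=
  exists P, ME_model K P.

Definition ctx_mass (P : alcp R V NC NR) (kappa : pform V) : R :=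
  \sum_(w : ap_W P | fsat (pw_val (ap_world P w)) kappa) ap_pr P w.

Definition condprob (P : alcp R V NC NR) (C D : concept NC NR) (kappa : pform V) : R :=
  (\sum_(w : ap_W P | fsat (pw_val (ap_world P w)) kappa &&
                      `[< cext (ap_world P w) C `<=` cext (ap_world P w) D >]) ap_pr P w)
  / ctx_mass P kappa.

Definition belief_values (K : kb R V NC NR) (C D : concept NC NR) (kappa : pform V) : set R :=
  [set x | exists P, ME_model K P /\ x = condprob P C D kappa].

Definition belief_lo K C D kappa : R := inf (belief_values K C D kappa).
Definition belief_hi K C D kappa : R := sup (belief_values K C D kappa).

(* the belief interval is defined: the conditioning context has positive
   probability in every ME-model *)
Definition belief_defined (K : kb R V NC NR) (kappa : pform V) : Prop :=
  forall P, ME_model K P -> 0 < ctx_mass P kappa.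

Definition kb_converges (Ks : nat -> kb R V NC NR) (K : kb R V NC NR) : Prop :=
  (forall i (I : pworld V NC NR), ModT (Ks i).2 I <-> ModT K.2 I) /\
  ((fun i => blaschke (ModR (Ks i).1) (ModR K.1)) @ \oo --> (0 : R)).
End ALCP.

(* Entropy is strongly concave for the Euclidean distance: pointwise,
   a ln a + b ln b - (a + b) ln ((a + b) / 2) >= (a - b)^2 / 8, which follows from
   ln x <= x - 1 applied at the square roots (a Hellinger-type bound).  It is also
   1/2-Hoelder continuous, since |x ln x - y ln y| <= 2 sqrt |x - y| on [0, 1].  Hence
   the ME distribution of a convex constraint set is unique, any admissible Q satisfies
   ||P^ME - Q||^2 <= 8 (H(P^ME) - H(Q)), and Blaschke convergence of Mod(R_i) to Mod(R)
   forces P^ME_{R_i} -> P^ME_R.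
   For the belief interval, every ME-model induces P^ME, and ME-models may be built with
   one world per valuation v: a T-world with valuation v refuting (resp. satisfying)
   C [= D whenever one exists.  So l and u are the P^ME-conditional probabilities, given
   kappa, of the sets of valuations all of whose T-worlds satisfy C [= D, resp. some of
   whose T-worlds do.  These sets depend only on Mod(T), and the ratios are continuous
   in P^ME since P^ME(kappa) > 0. *)

From Pilot Require Import Defs.
From HB Require Import structures.
From mathcomp Require Import all_boot all_order all_algebra.
From mathcomp Require Import all_classical all_reals all_analysis.
From mathcomp Require Import ring lra.
Set Implicit Arguments. Unset Strict Implicit. Unset Printing Implicit Defensive.
Import Order.TTheory GRing.Theory Num.Theory.
Import numFieldNormedType.Exports.
Local Open Scope classical_set_scope.
Local Open Scope ring_scope.

Section xlnx.
Variable R : realType.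
Implicit Types x y a b m : R.

Lemma ln_le_subr1 x : 0 < x -> ln x <= x - 1.
Proof.
by move=> x0; have := @le_ln1Dx R (x - 1); rewrite [1 + _]addrC subrK; apply; lra.
Qed.

Lemma ln_sqrtr x : 0 < x -> ln x = 2 * ln (Num.sqrt x).
Proof.
by move=> x0; rewrite -{1}(sqr_sqrtr (ltW x0)) lnXn ?sqrtr_gt0 // mulr_natl.
Qed.

Lemma mul_lnB_le x y : 0 <= x -> 0 < y -> x * ln y - x * ln x <= y - x.
Proof.
move=> x0 y0; have [->|xn0] := eqVneq x 0; first by rewrite !mul0r subrr subr0 ltW.
have xp : 0 < x by rewrite lt0r xn0.
have := ln_le_subr1 (divr_gt0 y0 xp); rewrite ln_div ?posrE // => h.
have -> : y - x = x * (y / x - 1) by field; rewrite gt_eqF.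
by rewrite -mulrBr ler_wpM2l.
Qed.

Lemma mul_ln_le x y : 0 <= x -> x <= y -> x * ln x <= x * ln y.
Proof.
move=> x0 xy; have [->|xn0] := eqVneq x 0; first by rewrite !mul0r.
have xp : 0 < x by rewrite lt0r xn0.
by rewrite ler_pM2l // ler_ln ?posrE // (lt_le_trans xp).
Qed.

Lemma neg_xlnx_le_sqrt x : 0 <= x -> - (x * ln x) <= 2 * Num.sqrt x.
Proof.
move=> x0; have [->|xn0] := eqVneq x 0; first by rewrite mul0r oppr0 sqrtr0 mulr0.
have xp : 0 < x by rewrite lt0r xn0.
set s := Num.sqrt x; have s0 : 0 < s by rewrite sqrtr_gt0.
have := mul_lnB_le (ltW s0) ltr01; rewrite ln1 mulr0 sub0r => h.
rewrite ln_sqrtr // -/s -{1}(sqr_sqrtr x0) -/s; nra.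
Qed.

Lemma norm_xlnxB_le x y : 0 <= x <= 1 -> 0 <= y <= 1 ->
  `|x * ln x - y * ln y| <= 2 * Num.sqrt `|x - y|.
Proof.
wlog xy : x y / x <= y.
  move=> hw hx hy; case/orP: (le_total x y) => [xy|yx]; first exact: hw xy hx hy.
  by rewrite distrC [`|x - y|]distrC; exact: hw yx hy hx.
move=> /andP[x0 _] /andP[_ y1].
have -> : `|x - y| = y - x by rewrite distrC ger0_norm ?subr_ge0.
set d := y - x; have d0 : 0 <= d by rewrite subr_ge0.
have sd0 := sqrtr_ge0 d.
have d_le_sqrt : d <= Num.sqrt d.
  have d1 : d <= 1 by rewrite /d; lra.
  rewrite -{1}(sqr_sqrtr d0); have : Num.sqrt d <= 1 by rewrite -sqrtr1 ler_sqrt.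
  nra.
have split_y : y * ln y = x * ln y + d * ln y by rewrite /d; ring.
have xlnx_le := mul_ln_le x0 xy.
have dlnd_le : d * ln d <= d * ln y by apply: mul_ln_le => //; rewrite /d; lra.
have dlny_le0 : d * ln y <= 0 by rewrite mulr_ge0_le0 // ln_le0.
have dlnd_ge := neg_xlnx_le_sqrt d0.
have ratio : x * ln y - x * ln x <= d.
  have [y0|yn0] := eqVneq y 0.
    have -> : x = 0 by apply/le_anti; rewrite x0 -y0 xy.
    by rewrite !mul0r subrr.
  by apply: (mul_lnB_le x0); rewrite lt0r yn0 (le_trans x0 xy).
rewrite ler_norml; apply/andP; split; lra.
Qed.

Lemma mul_lnB_ge_sqrt a m : 0 <= a -> 0 < m ->
  2 * a - 2 * Num.sqrt a * Num.sqrt m <= a * ln a - a * ln m.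
Proof.
move=> a0 m0; have [->|an0] := eqVneq a 0.
  by rewrite sqrtr0 !mul0r mulr0 mul0r subrr.
have ap : 0 < a by rewrite lt0r an0.
set sa := Num.sqrt a; set sm := Num.sqrt m.
have sa0 : 0 <= sa := sqrtr_ge0 a.
have sm0 : 0 < sm by rewrite sqrtr_gt0.
have := mul_lnB_le sa0 sm0.
rewrite (ln_sqrtr ap) (ln_sqrtr m0) -/sa -/sm -(sqr_sqrtr a0) -/sa; nra.
Qed.

Lemma sqrt_mean_gap_ge (al be s : R) : 0 <= al <= 1 -> 0 <= be <= 1 -> 0 <= s ->
  s ^+ 2 = (al ^+ 2 + be ^+ 2) / 2 ->
  (al ^+ 2 - be ^+ 2) ^+ 2 / 8 <= 2 * (al ^+ 2 + be ^+ 2) - 2 * s * (al + be).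
Proof.
move=> /andP[al0 al1] /andP[be0 be1] s0 hs.
have hs2 : 2 * s ^+ 2 = al ^+ 2 + be ^+ 2 by rewrite hs; field.
have sum_le : al + be <= 2 * s.
  have : (al + be) ^+ 2 <= (2 * s) ^+ 2 by have := sqr_ge0 (al - be); nra.
  by rewrite ler_pXn2r // ?nnegrE; nra.
have gap_ge : (al - be) ^+ 2 / 2 <= 2 * (al ^+ 2 + be ^+ 2) - 2 * s * (al + be).
  have -> : 2 * (al ^+ 2 + be ^+ 2) - 2 * s * (al + be) = 2 * s * (2 * s - (al + be)).
    by rewrite -hs2; ring.
  have : (2 * s - (al + be)) * (2 * s + (al + be)) = (al - be) ^+ 2 by nra.
  have := sqr_ge0 (2 * s - (al + be)); nra.
have : (al ^+ 2 - be ^+ 2) ^+ 2 <= 4 * (al - be) ^+ 2.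
  have -> : (al ^+ 2 - be ^+ 2) ^+ 2 = (al - be) ^+ 2 * (al + be) ^+ 2 by ring.
  have : (al + be) ^+ 2 <= 4 by nra.
  have := sqr_ge0 (al - be); nra.
lra.
Qed.

Lemma xlnx_midpoint_gap_ge a b : 0 <= a <= 1 -> 0 <= b <= 1 ->
  (a - b) ^+ 2 / 8 <= a * ln a + b * ln b - (a + b) * ln ((a + b) / 2).
Proof.
move=> a01 b01; have /andP[a0 a1] := a01; have /andP[b0 b1] := b01.
have [ab0|abn0] := eqVneq (a + b) 0.
  have [-> ->] : a = 0 /\ b = 0 by split; apply/le_anti/andP; split; lra.
  by rewrite !mul0r; lra.
have m0 : 0 < (a + b) / 2 by rewrite divr_gt0 // lt0r abn0 addr_ge0.
have sqrt01 (c : R) : 0 <= c <= 1 -> 0 <= Num.sqrt c <= 1.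
  by case/andP=> _ c1; rewrite sqrtr_ge0 -sqrtr1 ler_sqrt.
have hs : Num.sqrt ((a + b) / 2) ^+ 2 = (Num.sqrt a ^+ 2 + Num.sqrt b ^+ 2) / 2.
  by rewrite !sqr_sqrtr // ltW.
have := sqrt_mean_gap_ge (sqrt01 a a01) (sqrt01 b b01) (sqrtr_ge0 _) hs.
rewrite !sqr_sqrtr //.
have := mul_lnB_ge_sqrt a0 m0; have := mul_lnB_ge_sqrt b0 m0.
lra.
Qed.
End xlnx.

Section distributions.
Variables (R : realType) (V : finType).
Implicit Types (P Q : dvec R V) (rs : seq (pconstr R V)).

Local Notation n := #|{: interp V}|%:R.

Definition midpoint P Q : dvec R V := [ffun v => (P v + Q v) / 2].

Lemma is_distr_bounds P v : is_distr P -> 0 <= P v <= 1.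
Proof. by case=> h _; exact: h. Qed.

Lemma dvec_edist_ge0 P Q : 0 <= Defs.edist P Q.
Proof. exact: sqrtr_ge0. Qed.

Lemma coord_le_edist P Q v : `|P v - Q v| <= Defs.edist P Q.
Proof.
rewrite /Defs.edist -sqrtr_sqr ler_sqrt; last by apply: sumr_ge0 => w _; exact: sqr_ge0.
by rewrite (bigD1 v) //= lerDl; apply: sumr_ge0 => w _; exact: sqr_ge0.
Qed.

Lemma edist_le_sqrt_card P Q : is_distr P -> is_distr Q -> Defs.edist P Q <= Num.sqrt n.
Proof.
move=> hP hQ; rewrite /Defs.edist ler_sqrt ?ler0n //.
apply: le_trans (_ : \sum_(v : interp V) (1 : R) <= _); last by rewrite sumr_const.
apply: ler_sum => v _.
have /andP[? ?] := is_distr_bounds v hP; have /andP[? ?] := is_distr_bounds v hQ.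
nra.
Qed.

Lemma entropy_midpoint_gap_ge P Q : is_distr P -> is_distr Q ->
  Defs.edist P Q ^+ 2 / 16 <= entropy (midpoint P Q) - (entropy P + entropy Q) / 2.
Proof.
move=> hP hQ.
rewrite /Defs.edist sqr_sqrtr; last by apply: sumr_ge0 => v _; exact: sqr_ge0.
have -> : entropy (midpoint P Q) - (entropy P + entropy Q) / 2 =
    (\sum_v (P v * ln (P v) + Q v * ln (Q v) - (P v + Q v) * ln ((P v + Q v) / 2))) / 2.
  rewrite /entropy; under eq_bigr do rewrite ffunE.
  rewrite sumrB big_split /=.
  have -> : \sum_v (P v + Q v) / 2 * ln ((P v + Q v) / 2) =
            (\sum_v (P v + Q v) * ln ((P v + Q v) / 2)) / 2.
    by rewrite mulr_suml; apply: eq_bigr => v _; rewrite mulrAC.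
  by field.
have -> : (\sum_v (P v - Q v) ^+ 2) / 16 = (\sum_v (P v - Q v) ^+ 2 / 8) / 2.
  by rewrite -mulr_suml; field.
rewrite ler_pM2r ?invr_gt0 ?ltr0n //; apply: ler_sum => v _.
exact: xlnx_midpoint_gap_ge (is_distr_bounds v hP) (is_distr_bounds v hQ).
Qed.

Lemma norm_entropyB_le P Q : is_distr P -> is_distr Q ->
  `|entropy P - entropy Q| <= 2 * n * Num.sqrt (Defs.edist P Q).
Proof.
move=> hP hQ; rewrite /entropy opprK addrC -sumrB.
apply: le_trans (ler_norm_sum _ _ _) _.
have -> : 2 * n * Num.sqrt (Defs.edist P Q) = \sum_(v : interp V) 2 * Num.sqrt (Defs.edist P Q).
  by rewrite sumr_const -[_ *+ #|_|]mulr_natr mulrAC.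
apply: ler_sum => v _.
rewrite distrC; apply: le_trans (norm_xlnxB_le (is_distr_bounds v hP) (is_distr_bounds v hQ)) _.
by rewrite ler_pM2l // ler_sqrt ?dvec_edist_ge0 ?coord_le_edist.
Qed.

Lemma is_distr_midpoint P Q : is_distr P -> is_distr Q -> is_distr (midpoint P Q).
Proof.
move=> hP hQ; split.
  move=> v; rewrite ffunE.
  have /andP[? ?] := is_distr_bounds v hP; have /andP[? ?] := is_distr_bounds v hQ.
  apply/andP; split; lra.
under eq_bigr do rewrite ffunE.
by rewrite -mulr_suml big_split /= hP.2 hQ.2; field.
Qed.

Lemma probf_midpoint P Q phi : probf (midpoint P Q) phi = (probf P phi + probf Q phi) / 2.
Proof. by rewrite /probf; under eq_bigr do rewrite ffunE; rewrite -mulr_suml big_split. Qed.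

Lemma ModR_midpoint rs P Q : ModR rs P -> ModR rs Q -> ModR rs (midpoint P Q).
Proof.
move=> [hP cP] [hQ cQ]; split; first exact: is_distr_midpoint.
move=> c hc; move: (cP c hc) (cQ c hc); rewrite /sat_pconstr.
have -> : \sum_(t <- pc_terms c) t.1 * probf (midpoint P Q) t.2 =
    (\sum_(t <- pc_terms c) t.1 * probf P t.2 + \sum_(t <- pc_terms c) t.1 * probf Q t.2) / 2.
  by rewrite -big_split mulr_suml; apply: eq_bigr => t _; rewrite probf_midpoint /=; ring.
lra.
Qed.

Lemma is_ME_edist_le rs P Q : is_ME rs P -> ModR rs Q ->
  Defs.edist P Q ^+ 2 <= 8 * (entropy P - entropy Q).
Proof.
move=> [mP maxP] mQ; have := entropy_midpoint_gap_ge mP.1 mQ.1.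
have := maxP _ (ModR_midpoint mP mQ); lra.
Qed.

Lemma is_ME_unique rs P Q : is_ME rs P -> is_ME rs Q -> P = Q.
Proof.
move=> hP hQ; have dPQ := is_ME_edist_le hP hQ.1; have HP_le := hQ.2 _ hP.1.
have d_eq0 : Defs.edist P Q = 0 by have := dvec_edist_ge0 P Q; nra.
apply/ffunP => v; apply/eqP; rewrite -subr_eq0 -normr_le0 -d_eq0.
exact: coord_le_edist.
Qed.

Definition hausdorff_le (S1 S2 : set (dvec R V)) (d : R) : Prop :=
  (forall P1, S1 P1 -> exists P2, S2 P2 /\ Defs.edist P1 P2 <= d) /\
  (forall P2, S2 P2 -> exists P1, S1 P1 /\ Defs.edist P2 P1 <= d).

Lemma blaschke_approx (S1 S2 : set (dvec R V)) (eps : R) :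
  S1 `<=` @is_distr R V -> S2 `<=` @is_distr R V -> S1 !=set0 -> S2 !=set0 -> 0 < eps ->
  hausdorff_le S1 S2 (blaschke S1 S2 + eps).
Proof.
move=> S1d S2d [P1 S1P1] [P2 S2P2] eps0.
have ne : [set d | hausdorff_le S1 S2 d] !=set0.
  exists (Num.sqrt n); split=> [Q1 /S1d dQ1|Q2 /S2d dQ2].
    by exists P2; split; last exact: edist_le_sqrt_card dQ1 (S2d _ S2P2).
  by exists P1; split; last exact: edist_le_sqrt_card dQ2 (S1d _ S1P1).
have b_lt : blaschke S1 S2 < blaschke S1 S2 + eps by rewrite ltrDl.
have [d [near12 near21] d_lt] := inf_lt ne b_lt.
split=> [Q1 /near12|Q2 /near21] [Q [SQ dQ]]; exists Q; split=> //; lra.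
Qed.

Lemma is_ME_coord_close rs1 rs2 P1 P2 t v :
  is_ME rs1 P1 -> is_ME rs2 P2 -> hausdorff_le (ModR rs1) (ModR rs2) t ->
  `|P1 v - P2 v| <= t + Num.sqrt (32 * n * Num.sqrt t).
Proof.
move=> hP1 hP2 [near12 near21].
have [Q2 [mQ2 dQ2]] := near12 _ hP1.1.
have [Q1 [mQ1 dQ1]] := near21 _ hP2.1.
have ent_close P Q : is_distr P -> is_distr Q -> Defs.edist P Q <= t ->
    `|entropy P - entropy Q| <= 2 * n * Num.sqrt t.
  move=> dP dQ dPQ; apply: le_trans (norm_entropyB_le dP dQ) _.
  by rewrite ler_wpM2l ?mulr_ge0 ?ler0n // ler_sqrt // (le_trans (dvec_edist_ge0 _ _) dPQ).
have /ler_normlP[_ H1Q2] := ent_close _ _ hP1.1.1 mQ2.1 dQ2.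
have /ler_normlP[_ H2Q1] := ent_close _ _ hP2.1.1 mQ1.1 dQ1.
have H1_ge := hP1.2 _ mQ1.
have dP2Q2 : Defs.edist P2 Q2 <= Num.sqrt (32 * n * Num.sqrt t).
  rewrite -(ger0_norm (dvec_edist_ge0 P2 Q2)) -sqrtr_sqr ler_sqrt ?mulr_ge0 ?ler0n //.
  have := is_ME_edist_le hP2 mQ2; lra.
have := coord_le_edist P1 Q2 v; have := coord_le_edist P2 Q2 v.
move=> dQ2P2 dP1Q2; rewrite distrC in dQ2P2.
apply: le_trans (ler_distD (Q2 v) _ _) _; lra.
Qed.

Lemma is_ME_cvg (rs_ : nat -> seq (pconstr R V)) rs (P_ : nat -> dvec R V) P :
  (forall i, is_ME (rs_ i) (P_ i)) -> is_ME rs P ->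
  (fun i => blaschke (ModR (rs_ i)) (ModR rs)) @ \oo --> 0 ->
  forall v, (fun i => P_ i v) @ \oo --> P v.
Proof.
move=> hP_ hP blaschke0 v.
(* [harmonic i] is added since the infimum defining the Blaschke distance need not be attained. *)
pose t i := blaschke (ModR (rs_ i)) (ModR rs) + harmonic i.
pose bound i := t i + Num.sqrt (32 * n * Num.sqrt (t i)).
have close i : `|P_ i v - P v| <= bound i.
  apply: (is_ME_coord_close v (hP_ i) hP); apply: blaschke_approx (harmonic_gt0 i).
  - by move=> Q [].
  - by move=> Q [].
  - by exists (P_ i); exact: (hP_ i).1.
  - by exists P; exact: hP.1.
have t0 : t @ \oo --> 0 by rewrite -[0]addr0; apply: cvgD => //; exact: cvg_harmonic.
have sqrt0 (u : nat -> R) : u @ \oo --> 0 -> (fun i => Num.sqrt (u i)) @ \oo --> 0.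
  by move=> u0; rewrite -sqrtr0; exact: (continuous_cvg _ (@sqrt_continuous R 0) u0).
have bound0 : bound @ \oo --> 0.
  rewrite -[0]addr0; apply: cvgD => //; apply/sqrt0.
  rewrite -(mulr0 (32 * n)); apply: cvgM; [exact: cvg_cst | exact/sqrt0].
apply: (squeeze_cvgr (f := fun i => P v - bound i) (h := fun i => P v + bound i)).
- by apply: nearW => i; rewrite -ler_distl close.
- by rewrite -[X in _ --> X]subr0; apply: cvgB => //; exact: cvg_cst.
- by rewrite -[X in _ --> X]addr0; apply: cvgD => //; exact: cvg_cst.
Qed.
End distributions.

Lemma inf_eq_min (R : realType) (S : set R) x : S x -> lbound S x -> inf S = x.
Proof.
move=> Sx lbx; apply/le_anti; rewrite lb_le_inf ?andbT //; last by exists x.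
by apply: ge_inf => //; exists x.
Qed.

Lemma sup_eq_max (R : realType) (S : set R) x : S x -> ubound S x -> sup S = x.
Proof.
move=> Sx ubx; apply/le_anti; rewrite ge_sup //=; last by exists x.
by apply: ub_le_sup => //; exists x.
Qed.

Lemma ler_sum_sub (R : numDomainType) {I : finType} (P Q : pred I) (F : I -> R) :
  (forall i, 0 <= F i) -> (forall i, P i -> Q i) -> \sum_(i | P i) F i <= \sum_(i | Q i) F i.
Proof.
move=> F0 PQ; rewrite big_mkcond [X in _ <= X]big_mkcond; apply: ler_sum => i _.
by case Pi: (P i); [rewrite PQ | case: ifP].
Qed.

Section conditional.
Variables (R : realType) (V : finType).
Implicit Types (Q : dvec R V) (b : pred (interp V)) (kappa : pform V).

Definition condp Q b kappa : R :=
  (\sum_(v | fsat v kappa && b v) Q v) / \sum_(v | fsat v kappa) Q v.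

Lemma cvg_condp (Q_ : nat -> dvec R V) Q b kappa :
  (forall v, (fun i => Q_ i v) @ \oo --> Q v) -> \sum_(v | fsat v kappa) Q v != 0 ->
  (fun i => condp (Q_ i) b kappa) @ \oo --> condp Q b kappa.
Proof.
move=> Q_Q den0; have cvg_sum p : (fun i => \sum_(v | p v) Q_ i v) @ \oo --> \sum_(v | p v) Q v.
  by apply: cvg_big => //; exact: add_continuous.
by apply: cvgM; [exact: cvg_sum | exact: cvgV].
Qed.
End conditional.

Section belief_interval.
Variables (R : realType) (V : finType) (NC NR : Type).
Implicit Types (T : seq (gci V NC NR)) (I : pworld V NC NR) (q : pworld V NC NR -> Prop)
  (K : kb R V NC NR) (P : alcp R V NC NR) (C D : concept NC NR) (kappa : pform V).

Definition subsumes C D I : Prop := cext I C `<=` cext I D.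

Definition realizable T q (v : interp V) : Prop :=
  exists I, [/\ ModT T I, pw_val I = v & q I].

Definition lower_belief T C D kappa (Q : dvec R V) : R :=
  condp Q (fun v => ~~ `[< realizable T (fun I => ~ subsumes C D I) v >]) kappa.

Definition upper_belief T C D kappa (Q : dvec R V) : R :=
  condp Q (fun v => `[< realizable T (subsumes C D) v >]) kappa.

Lemma realizable_eq T1 T2 : (forall I, ModT T1 I <-> ModT T2 I) -> realizable T1 = realizable T2.
Proof.
move=> T12; apply/funext => q; apply/funext => v; apply/propext.
by split=> -[I [/T12 ? ? ?]]; exists I.
Qed.

Lemma sum_induced P (p : pred (interp V)) :
  \sum_(w | p (pw_val (ap_world P w))) ap_pr P w = \sum_(v | p v) Defs.induced P v.
Proof.
rewrite (partition_big (fun w => pw_val (ap_world P w)) p) //=.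
apply: eq_bigr => v pv; rewrite ffunE; apply: eq_bigl => w.
by case: eqP => [->|]; rewrite ?pv ?andbF ?andbT.
Qed.

Lemma ctx_mass_induced P kappa : ctx_mass P kappa = \sum_(v | fsat v kappa) Defs.induced P v.
Proof. exact: sum_induced. Qed.

Lemma condprob_bounds T P C D kappa :
  (forall w, ModT T (ap_world P w)) -> 0 < ctx_mass P kappa ->
  lower_belief T C D kappa (Defs.induced P) <= condprob P C D kappa
  <= upper_belief T C D kappa (Defs.induced P).
Proof.
move=> PT mass0; rewrite /lower_belief /upper_belief /condp /condprob -ctx_mass_induced.
rewrite !ler_pM2r ?invr_gt0 // -!(sum_induced P (fun v => fsat v kappa && _)).
apply/andP; split; apply: ler_sum_sub (@ap_pr_ge0 _ _ _ _ P) _ => w /andP[-> /=].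
  move=> /asboolPn not_refuted; apply/asboolP; apply: contrapT => not_sub.
  by apply: not_refuted; exists (ap_world P w).
by move=> /asboolP sub; apply/asboolP; exists (ap_world P w).
Qed.

Lemma alcp_world_exists T P : (forall w, ModT T (ap_world P w)) -> exists I, ModT T I.
Proof.
move=> PT; case: (pickP (fun _ : ap_W P => true)) => [w _|W0]; first by exists (ap_world P w).
by move: (ap_pr_sum1 P); rewrite big_pred0 // => /eqP; rewrite eq_sym oner_eq0.
Qed.

Lemma induced_neq0_realizable T P v : (forall w, ModT T (ap_world P w)) ->
  Defs.induced P v != 0 -> realizable T (fun=> True) v.
Proof.
move=> PT; rewrite ffunE => nz; apply: contrapT => not_real; move: nz.
by rewrite big1 ?eqxx // => w /eqP wv; exfalso; apply: not_real; exists (ap_world P w).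
Qed.

Definition choose_world T q (I0 : pworld V NC NR) v : pworld V NC NR :=
  match pselect (exists I, [/\ ModT T I, pw_val I = v & (realizable T q v -> q I)]) with
  | left h => proj1_sig (cid h)
  | right _ => I0
  end.

Lemma choose_worldP T q I0 v : ModT T I0 ->
  ModT T (choose_world T q I0 v) /\
  (realizable T (fun=> True) v ->
   pw_val (choose_world T q I0 v) = v /\ (realizable T q v -> q (choose_world T q I0 v))).
Proof.
rewrite /choose_world => I0T; case: pselect => [h|no_world].
  by case: (cid h) => I [].
split=> // -[I [IT Iv _]]; exfalso; apply: no_world.
have [[J [JT Jv qJ]]|not_q] := pselect (realizable T q v); first by exists J.
by exists I; split=> // /not_q.
Qed.

Lemma condp_belief_value K P0 C D kappa q (b : pred (interp V)) :
  ME_model K P0 ->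
  (forall I, ModT K.2 I -> (realizable K.2 q (pw_val I) -> q I) ->
     subsumes C D I <-> b (pw_val I)) ->
  belief_values K C D kappa (condp (Defs.induced P0) b kappa).
Proof.
move=> [P0T P0ME] hb; have [I0 I0T] := alcp_world_exists P0T.
set Q := Defs.induced P0; have Qd : is_distr Q := P0ME.1.1.
pose world v := choose_world K.2 q I0 v.
have worldT v : ModT K.2 (world v) by have [] := choose_worldP q v I0T.
have world_spec v : Q v != 0 ->
    pw_val (world v) = v /\ (realizable K.2 q v -> q (world v)).
  by move=> /(induced_neq0_realizable P0T); have [_] := choose_worldP q v I0T; apply.
have Q0 v : 0 <= Q v by have /andP[] := is_distr_bounds v Qd.
pose P := @ALCP R V NC NR (interp V) world Q Q0 Qd.2.
have PQ : Defs.induced P = Q.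
  apply/ffunP => v; rewrite ffunE /= (eq_bigl_supp (pred1 v)) ?big_pred1_eq //.
  by move=> w; rewrite inE => /world_spec[->].
exists P; split; first by split; rewrite ?PQ.
rewrite /condprob /ctx_mass /condp; congr (_ / _); apply: esym; apply: eq_bigl_supp => v.
  rewrite inE => /world_spec[wv qw]; rewrite /= wv; congr (_ && _).
  have := hb _ (worldT v); rewrite wv => /(_ qw) subs_b.
  by apply/asboolP/idP => /subs_b.
by rewrite inE => /world_spec[->].
Qed.

Lemma belief_values_bounds K P0 C D kappa x : ME_model K P0 -> belief_defined K kappa ->
  belief_values K C D kappa x ->
  lower_belief K.2 C D kappa (Defs.induced P0) <= x
  <= upper_belief K.2 C D kappa (Defs.induced P0).
Proof.
move=> [_ P0ME] Kdef [P [[PT PME] ->]].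
rewrite -(is_ME_unique PME P0ME); exact: condprob_bounds PT (Kdef P (conj PT PME)).
Qed.

Lemma belief_lo_ME K P0 C D kappa : ME_model K P0 -> belief_defined K kappa ->
  belief_lo K C D kappa = lower_belief K.2 C D kappa (Defs.induced P0).
Proof.
move=> P0K Kdef; apply: inf_eq_min => [|x /(belief_values_bounds P0K Kdef) /andP[] //].
apply: (condp_belief_value kappa (q := fun I => ~ subsumes C D I) P0K).
move=> I IT refuted_q; split=> [sub | /asboolPn not_refuted].
  by apply/asboolPn => /refuted_q.
by apply: contrapT => not_sub; apply: not_refuted; exists I.
Qed.

Lemma belief_hi_ME K P0 C D kappa : ME_model K P0 -> belief_defined K kappa ->
  belief_hi K C D kappa = upper_belief K.2 C D kappa (Defs.induced P0).
Proof.
move=> P0K Kdef; apply: sup_eq_max => [|x /(belief_values_bounds P0K Kdef) /andP[] //].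
apply: (condp_belief_value kappa (q := subsumes C D) P0K).
move=> I IT sub_q; split=> [sub | /asboolP /sub_q //].
by apply/asboolP; exists I.
Qed.
End belief_interval.

Theorem theorem9 (R : realType) (V : finType) (NC NR : Type)
  (Ks : nat -> kb R V NC NR) (K : kb R V NC NR)
  (C D : concept NC NR) (kappa : pform V) :
  (forall i, ME_consistent (Ks i)) ->
  ME_consistent K ->
  kb_converges Ks K ->
  (forall i, belief_defined (Ks i) kappa) ->
  belief_defined K kappa ->
  ((fun i => belief_lo (Ks i) C D kappa) @ \oo --> belief_lo K C D kappa) /\
  ((fun i => belief_hi (Ks i) C D kappa) @ \oo --> belief_hi K C D kappa).
Proof.
move=> Ks_cons [P PK] [sameT blaschke0] Ks_def K_def.
pose P_ i := proj1_sig (cid (Ks_cons i)).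
have P_Ks i : ME_model (Ks i) (P_ i) := proj2_sig (cid (Ks_cons i)).
have cvgP := is_ME_cvg (fun i => (P_Ks i).2) PK.2 blaschke0.
have den0 : \sum_(v | fsat v kappa) Defs.induced P v != 0.
  by rewrite -ctx_mass_induced lt0r_neq0 // K_def.
have sameR i : realizable (Ks i).2 = realizable K.2 := realizable_eq (sameT i).
rewrite (belief_lo_ME C D PK K_def) (belief_hi_ME C D PK K_def); split.
- under eq_cvg do rewrite (belief_lo_ME C D (P_Ks _) (Ks_def _)) /lower_belief sameR.
  exact: cvg_condp _ cvgP den0.
- under eq_cvg do rewrite (belief_hi_ME C D (P_Ks _) (Ks_def _)) /upper_belief sameR.
  exact: cvg_condp _ cvgP den0.
Qed.
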